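(* Let $\psi':V'\otimes V\to V\otimes V^*$ and $\psi:V^*\otimes V\to V\otimes V^*$ be the $R$-linear maps defined by \[ \psi'(v_i'\otimes v_k)=\begin{cases}q^{n+1-2i}\,v_k\otimes v_i^* & k\ne i,\\ q^{n+1-2i}\Bigl(q^{-1}v_i\otimes v_i^*+(q^{-1}-q)\sum_{l=1}^{i-1}v_l\otimes v_l^*\Bigr) & k=i,\end{cases} \] \[ \psi(v_i^*\otimes v_k)=\begin{cases}v_k\otimes v_i^* & k\ne i,\\ q^{-1}v_i\otimes v_i^*+(q^{-1}-q)\sum_{l=1}^{i-1}v_l\otimes v_l^* & k=i.\end{cases} \] Then $\psi'$ and $\psi$ are isomorphisms of $\mathbf U$-modules (in particular bijective for every $R$ and every invertible $q$).
   Context: $R$ is a commutative ring with $1$, $q\in R$ invertible, $n\ge1$. $\mathbf U$ denotes $\mathbf U_R=R\otimes_{\mathbb{Z}[q,q^{-1}]}\mathbf U$, where $\mathbf U$ is the $\mathbb{Z}[q,q^{-1}]$-subalgebra of $U_q(\mathfrak{gl}_n)$ (generators $e_i,f_i$ ($1\le i<n$), $q^h$ ($h\in\bigoplus_j\mathbb{Z}h_j$), standard relations, $K_i=q^{h_i-h_{i+1}}$) generated by the $q^h$ and divided powers $e_i^{(l)}=e_i^l/[l]_q!$, $f_i^{(l)}=f_i^l/[l]_q!$, $[l]_q=\sum_{j=0}^{l-1}q^{2j-l+1}$; Hopf structure $\Delta(q^h)=q^h\otimes q^h$, $\Delta(e_i)=e_i\otimes K_i^{-1}+1\otimes e_i$,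 $\Delta(f_i)=f_i\otimes1+K_i\otimes f_i$, $S(q^h)=q^{-h}$, $S(e_i)=-e_iK_i$, $S(f_i)=-K_i^{-1}f_i$. $V=R^n$ with basis $v_1,\dots,v_n$ is the vector representation: $q^hv_j=q^{\varepsilon_j(h)}v_j$ ($\varepsilon_j(h_k)=\delta_{jk}$), $e_iv_{i+1}=v_i$, $f_iv_i=v_{i+1}$, other $e_iv_j,f_iv_j$ zero. $V^*=\mathrm{Hom}_R(V,R)$ with dual basis $v_i^*$ and action $(xg)(v)=g(S(x)v)$; $V'$ is the same $R$-module with action $(xg)(v)=g(S^{-1}(x)v)$, its basis elements written $v_i'$. Tensor products are modules via $\Delta$. *)

From HB Require Import structures.
From mathcomp Require Import all_boot all_order all_algebra.
Set Implicit Arguments.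
Unset Strict Implicit.
Unset Printing Implicit Defensive.
Import Order.TTheory GRing.Theory Num.Theory.
Local Open Scope ring_scope.

(* Conventions:
   - basis index v_1..v_n  <->  'I_n with values 0..n-1;
   - generator e_i, f_i (paper 1 <= i < n)  <->  i : nat with i.+1 < n,
     e_i v_{i+1} = v_i becomes: e_i maps basis index i.+1 to index i;
   - h = sum_j c_j h_j is represented by c : 'I_n -> int;
   - an R-linear map between free modules with finite bases indexed by I, J
     is its matrix A : J -> I -> R (A j i = coefficient of basis j in A(basis i));
   - a U-module structure on a free module with basis I is the data of the
     action matrices of the algebra generators q^h, e_i^(l), f_i^(l) of U. *)

Section QGroup.
Variables (R : comPzRingType) (n : nat) (q qinv : R).

(* q^z for z : int, with qinv the inverse of q *)
Definition qpow (z : int) : R :=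
  match z with Posz m => q ^+ m | Negz m => qinv ^+ m.+1 end.

Definition lmap (I J : finType) := J -> I -> R.

Definition lcomp (I J K : finType) (A : lmap J K) (B : lmap I J) : lmap I K :=
  fun k i => \sum_(j : J) A k j * B j i.

Definition lid (I : finType) : lmap I I := fun j i => (j == i)%:R.

Definition lscale (I : finType) (c : R) (A : lmap I I) : lmap I I :=
  fun j i => c * A j i.

Definition ltr (I : finType) (A : lmap I I) : lmap I I := fun j i => A i j.

Definition ltens (I J : finType) (A : lmap I I) (B : lmap J J)
  : lmap (I * J)%type (I * J)%type :=
  fun ab cd => A ab.1 cd.1 * B ab.2 cd.2.

Definition lapply (I J : finType) (A : lmap I J) (v : {ffun I -> R}) : {ffun J -> R} :=
  [ffun j => \sum_(i : I) A j i * v i].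

Record Umod (I : finType) := MkUmod {
  actH : ('I_n -> int) -> lmap I I;     (* action of q^h *)
  actE : nat -> nat -> lmap I I;        (* actE i l = action of e_i^(l) *)
  actF : nat -> nat -> lmap I I         (* actF i l = action of f_i^(l) *)
}.

(* the weight a * (h_i - h_{i+1}), so that q^(Kw i a) = K_i^a *)
Definition Kw (i : nat) (a : int) : 'I_n -> int :=
  fun j => a * (((nat_of_ord j == i) : int) - ((nat_of_ord j == i.+1) : int)).

Definition Vmod : Umod 'I_n := MkUmod
  (fun h j k => if j == k then qpow (h j) else 0)
  (fun i l j k => if l == 0%N then (j == k)%:R
                  else if l == 1%N then ((nat_of_ord j == i) && (nat_of_ord k == i.+1))%:R
                  else 0)
  (fun i l j k => if l == 0%N then (j == k)%:R
                  else if l == 1%N then ((nat_of_ord j == i.+1) && (nat_of_ord k == i))%:R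
                  else 0).

Definition sgnq (l : nat) (z : int) : R := (-1) ^+ l * qpow z.

(* dual module via S:  S(q^h) = q^-h,
   S(e_i^(l)) = (-1)^l q^(l(l-1)) e_i^(l) K_i^l,
   S(f_i^(l)) = (-1)^l q^(-l(l-1)) K_i^-l f_i^(l);
   (x g)(v) = g(S(x) v) gives the transposed matrix in the dual basis *)
Definition dualS (I : finType) (M : Umod I) : Umod I := MkUmod
  (fun h => ltr (actH M (fun j => - h j)))
  (fun i l => ltr (lscale (sgnq l (l * l.-1)%:Z)
                          (lcomp (actE M i l) (actH M (Kw i l%:Z)))))
  (fun i l => ltr (lscale (sgnq l (- (l * l.-1)%:Z))
                          (lcomp (actH M (Kw i (- l%:Z))) (actF M i l)))).

(* twisted dual module via S^-1:  S^-1(q^h) = q^-h,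
   S^-1(e_i^(l)) = (-1)^l q^(-l(l-1)) K_i^l e_i^(l),
   S^-1(f_i^(l)) = (-1)^l q^(l(l-1)) f_i^(l) K_i^-l *)
Definition dualSinv (I : finType) (M : Umod I) : Umod I := MkUmod
  (fun h => ltr (actH M (fun j => - h j)))
  (fun i l => ltr (lscale (sgnq l (- (l * l.-1)%:Z))
                          (lcomp (actH M (Kw i l%:Z)) (actE M i l))))
  (fun i l => ltr (lscale (sgnq l (l * l.-1)%:Z)
                          (lcomp (actF M i l) (actH M (Kw i (- l%:Z)))))).

(* tensor product via the coproduct of the generators:
   Delta(q^h) = q^h (x) q^h,
   Delta(e_i^(l)) = sum_{a+b=l} q^(ab) e_i^(a) (x) K_i^-a e_i^(b),
   Delta(f_i^(l)) = sum_{a+b=l} q^(ab) K_i^b f_i^(a) (x) f_i^(b)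
   (these follow from Delta(e_i) = e_i (x) K_i^-1 + 1 (x) e_i and
    Delta(f_i) = f_i (x) 1 + K_i (x) f_i by the q-binomial formula) *)
Definition tensmod (I J : finType) (M : Umod I) (N : Umod J) : Umod (I * J)%type :=
  MkUmod
  (fun h => ltens (actH M h) (actH N h))
  (fun i l ab cd => \sum_(a < l.+1)
      qpow (a * (l - a))%:Z *
      ltens (actE M i a) (lcomp (actH N (Kw i (- a%:Z))) (actE N i (l - a))) ab cd)
  (fun i l ab cd => \sum_(a < l.+1)
      qpow (a * (l - a))%:Z *
      ltens (lcomp (actH M (Kw i (l - a)%:Z)) (actF M i a)) (actF N i (l - a)) ab cd).

Definition is_Uhom (I J : finType) (M : Umod I) (N : Umod J) (P : lmap I J) : Prop :=
  [/\ forall h : 'I_n -> int, lcomp P (actH M h) = lcomp (actH N h) P,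
      forall i l : nat, (i.+1 < n)%N -> lcomp P (actE M i l) = lcomp (actE N i l) P
    & forall i l : nat, (i.+1 < n)%N -> lcomp P (actF M i l) = lcomp (actF N i l) P].

Definition is_Uiso (I J : finType) (M : Umod I) (N : Umod J) (P : lmap I J) : Prop :=
  is_Uhom M N P /\ bijective (lapply P).

Definition V' := dualSinv Vmod.
Definition Vstar := dualS Vmod.

(* psi : V^* (x) V -> V (x) V^*;  source index (i,k) = v_i^* (x) v_k,
   target index (a,b) = v_a (x) v_b^* *)
Definition psi : lmap ('I_n * 'I_n)%type ('I_n * 'I_n)%type :=
  fun ab ik =>
    let: (a, b) := ab in let: (i, k) := ik in
    if k != i then ((a == k) && (b == i))%:R
    else if (a == i) && (b == i) then qinv
    else if (a == b) && (a < i)%N then qinv - q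
    else 0.

(* psi' : V' (x) V -> V (x) V^*; paper index i (1-based) = i0.+1, so
   q^(n+1-2i) = q^(n-1-2 i0) *)
Definition psi' : lmap ('I_n * 'I_n)%type ('I_n * 'I_n)%type :=
  fun ab ik => qpow (n%:Z - 1 - 2 * (nat_of_ord ik.1)%:Z) * psi ab ik.

End QGroup.

From mathcomp Require Import all_boot all_order all_algebra.
From mathcomp Require Import ring zify.
From Stdlib Require Import FunctionalExtensionality IndefiniteDescription.
Set Implicit Arguments. Unset Strict Implicit. Unset Printing Implicit Defensive.
Import GRing.Theory.
Local Open Scope ring_scope.

(* The map psi' factors as psi composed with the twist v_i' (x) v_k |->
   q^(n+1-2i) v_i^* (x) v_k, which is a U-isomorphism V' (x) V -> V^* (x) V
   because v_i' |-> q^(n+1-2i) v_i^* already intertwines V' and V^*.  On V,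
   and hence on its two duals, every divided power e_i^(l), f_i^(l) with
   l >= 2 vanishes, so on a tensor product of two of them the divided powers
   of order >= 3 vanish and those of order 1 and 2 are explicit.  That psi
   intertwines them is then a finite identity between matrix entries: each
   entry of the actions involves at most two basis vectors.  Finally psi is
   bijective because, composed with the flip, it is triangular with
   invertible diagonal entries. *)

Section LinearMaps.
Variable R : comPzRingType.
Implicit Types I J K : finType.

Lemma sum_delta_l I (F : I -> R) (j : I) : \sum_m (m == j)%:R * F m = F j.
Proof.
by rewrite (bigD1 j) //= eqxx mul1r big1 ?addr0 // => m /negbTE ->; rewrite mul0r.
Qed.

Lemma sum_delta_r I (F : I -> R) (j : I) : \sum_m (j == m)%:R * F m = F j.
Proof. by rewrite -[RHS](sum_delta_l F); apply: eq_bigr => m _; rewrite eq_sym. Qed.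

Lemma big_support2 I (F : I -> R) (u1 u2 : I) :
  (forall j, j != u1 -> j != u2 -> F j = 0) ->
  \sum_j F j = F u1 + (if u2 == u1 then 0 else F u2).
Proof.
move=> F0; rewrite (bigD1 u1) //=; congr (_ + _).
case: (eqVneq u2 u1) => [e|u21]; first by rewrite big1 // => j ju1; apply: F0; rewrite ?e.
by rewrite (bigD1 u2) //= big1 ?addr0 // => j /andP[]; apply: F0.
Qed.

Lemma lcompA I J K L (A : lmap R K L) (B : lmap R J K) (C : lmap R I J) :
  lcomp (lcomp A B) C = lcomp A (lcomp B C).
Proof.
apply: functional_extensionality => l; apply: functional_extensionality => i.
rewrite /lcomp; under eq_bigr => j _ do rewrite big_distrl /=.
rewrite exchange_big; apply: eq_bigr => k _; rewrite big_distrr /=.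
by apply: eq_bigr => j _; rewrite mulrA.
Qed.

Lemma lcomp_lid I J (A : lmap R I J) : lcomp A (@lid R I) = A.
Proof.
apply: functional_extensionality => j; apply: functional_extensionality => i.
by rewrite /lcomp -[RHS](sum_delta_l (A j)); apply: eq_bigr => k _; rewrite mulrC.
Qed.

Lemma lid_lcomp I J (A : lmap R I J) : lcomp (@lid R J) A = A.
Proof.
apply: functional_extensionality => j; apply: functional_extensionality => i.
exact: sum_delta_r.
Qed.

Lemma lcomp_suml I J K m (c : 'I_m -> R) (A : 'I_m -> lmap R J K) (B : lmap R I J) :
  lcomp (fun k j => \sum_a c a * A a k j) B = fun k i => \sum_a c a * lcomp (A a) B k i.
Proof.
apply: functional_extensionality => k; apply: functional_extensionality => i.
rewrite /lcomp; under eq_bigr => j _ do rewrite big_distrl /=.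
rewrite exchange_big; apply: eq_bigr => a _; rewrite big_distrr /=.
by apply: eq_bigr => j _; rewrite mulrA.
Qed.

Lemma lcomp_sumr I J K m (c : 'I_m -> R) (A : lmap R J K) (B : 'I_m -> lmap R I J) :
  lcomp A (fun j i => \sum_a c a * B a j i) = fun k i => \sum_a c a * lcomp A (B a) k i.
Proof.
apply: functional_extensionality => k; apply: functional_extensionality => i.
rewrite /lcomp; under eq_bigr => j _ do rewrite big_distrr /=.
rewrite exchange_big; apply: eq_bigr => a _; rewrite big_distrr /=.
by apply: eq_bigr => j _; rewrite mulrCA.
Qed.

Lemma lcomp_ltens I1 I2 (A : lmap R I1 I1) (B : lmap R I2 I2)
    (C : lmap R I1 I1) (D : lmap R I2 I2) :
  lcomp (ltens A B) (ltens C D) = ltens (lcomp A C) (lcomp B D).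
Proof.
apply: functional_extensionality => -[a b]; apply: functional_extensionality => -[c d].
rewrite /lcomp /ltens /=.
rewrite -(pair_bigA _ (fun x y => A a x * B b y * (C x c * D y d))) big_distrl /=.
apply: eq_bigr => x _.
by rewrite big_distrr /=; apply: eq_bigr => y _; rewrite mulrACA.
Qed.

Lemma lcomp_zero I J K (A : lmap R J K) : lcomp A (fun (_ : J) (_ : I) => 0) = fun _ _ => 0.
Proof.
apply: functional_extensionality => k; apply: functional_extensionality => i.
by rewrite /lcomp big1 // => j _; rewrite mulr0.
Qed.

Lemma zero_lcomp I J K (A : lmap R I J) : lcomp (fun (_ : K) (_ : J) => 0) A = fun _ _ => 0.
Proof.
apply: functional_extensionality => k; apply: functional_extensionality => i.
by rewrite /lcomp big1 // => j _; rewrite mul0r.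
Qed.

Definition ldiag I (d : I -> R) : lmap R I I := fun j i => (j == i)%:R * d i.

Lemma lcomp_ldiagl I J (d : J -> R) (A : lmap R I J) j i :
  lcomp (ldiag d) A j i = d j * A j i.
Proof.
rewrite /lcomp -(sum_delta_r (fun k => d k * A k i) j).
by apply: eq_bigr => k _; rewrite mulrA.
Qed.

Lemma lcomp_ldiagr I J (d : I -> R) (A : lmap R I J) j i :
  lcomp A (ldiag d) j i = A j i * d i.
Proof.
rewrite /lcomp -(sum_delta_l (fun k => A j k * d k) i).
by apply: eq_bigr => k _; rewrite mulrCA; case: eqP => [->|_]; rewrite ?mul0r.
Qed.

Lemma ldiag1 I : ldiag (fun _ : I => 1) = @lid R I.
Proof.
apply: functional_extensionality => j; apply: functional_extensionality => i.
exact: mulr1.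
Qed.

Lemma ldiagC I (d e : I -> R) : lcomp (ldiag d) (ldiag e) = lcomp (ldiag e) (ldiag d).
Proof.
apply: functional_extensionality => j; apply: functional_extensionality => i.
rewrite lcomp_ldiagl lcomp_ldiagr /ldiag mulrCA -mulrA.
by rewrite [d j * _]mulrC; case: eqP => [->|_]; rewrite ?mul0r.
Qed.

Lemma ltens_ldiag I J (d : I -> R) (e : J -> R) :
  ltens (ldiag d) (ldiag e) = ldiag (fun x => d x.1 * e x.2).
Proof.
apply: functional_extensionality => -[a b]; apply: functional_extensionality => -[c d'].
rewrite /ltens /ldiag xpair_eqE /= mulrACA.
by case: (a == c); rewrite ?mul1r ?mul0r.
Qed.

Lemma ltr_ldiag I (d : I -> R) : ltr (ldiag d) = ldiag d.
Proof.
apply: functional_extensionality => j; apply: functional_extensionality => i.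
by rewrite /ltr /ldiag eq_sym; case: eqP => [->|_]; rewrite ?mul0r.
Qed.

Lemma ltr_lid I : ltr (@lid R I) = @lid R I.
Proof.
apply: functional_extensionality => j; apply: functional_extensionality => i.
by rewrite /ltr /lid eq_sym.
Qed.

Lemma lscale0 I (c : R) : lscale c (fun _ _ : I => 0) = fun _ _ => 0.
Proof.
apply: functional_extensionality => j; apply: functional_extensionality => i.
exact: mulr0.
Qed.

Lemma lapply_lcomp I J K (A : lmap R J K) (B : lmap R I J) v :
  lapply (lcomp A B) v = lapply A (lapply B v).
Proof.
apply/ffunP => k; rewrite !ffunE /lcomp.
under eq_bigr => i _ do rewrite big_distrl /=.
rewrite exchange_big /=; apply: eq_bigr => j _; rewrite ffunE big_distrr /=.
by apply: eq_bigr => i _; rewrite mulrA.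
Qed.

Lemma lapplyD I J (A : lmap R I J) v w : lapply A (v + w) = lapply A v + lapply A w.
Proof.
by apply/ffunP => j; rewrite !ffunE -big_split; apply: eq_bigr => i _; rewrite ffunE mulrDr.
Qed.

Lemma lapplyN I J (A : lmap R I J) v : lapply A (- v) = - lapply A v.
Proof.
by apply/ffunP => j; rewrite !ffunE -sumrN; apply: eq_bigr => i _; rewrite ffunE mulrN.
Qed.

Lemma lapply_scale I J (A : lmap R I J) c (v : {ffun I -> R}) :
  lapply A [ffun i => c * v i] = [ffun j => c * lapply A v j].
Proof.
apply/ffunP => j; rewrite !ffunE mulr_sumr.
by apply: eq_bigr => i _; rewrite ffunE mulrCA.
Qed.

Lemma lapply0 I J (A : lmap R I J) : lapply A 0 = 0.
Proof. by apply/ffunP => j; rewrite !ffunE big1 // => i _; rewrite ffunE mulr0. Qed.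

Lemma lapply_range_sum I J K (A : lmap R I J) (P : pred K) (F : K -> {ffun J -> R}) :
  (forall k, P k -> exists v, lapply A v = F k) ->
  exists v, lapply A v = \sum_(k | P k) F k.
Proof.
move=> FA; apply: (big_ind (fun w => exists v, lapply A v = w)) => [|_ _ [v <-] [w <-]|//].
  by exists 0; rewrite lapply0.
by exists (v + w); rewrite lapplyD.
Qed.

End LinearMaps.

Section Triangular.
Variables (R : comPzRingType) (I : finType) (A : lmap R I I).
Variables (pivot : I -> I) (rank : I -> nat) (pivot_inv : I -> R).
Hypothesis pivot_inj : injective pivot.
Hypothesis pivot_invP : forall i, pivot_inv i * A (pivot i) i = 1.
Hypothesis A_triangular :
  forall i j, j != i -> (rank i <= rank j)%N -> A (pivot j) i = 0.

Let delta (x : I) : {ffun I -> R} := [ffun y => (y == x)%:R].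

Lemma lapply_pivot v x :
  lapply A v (pivot x)
  = A (pivot x) x * v x + \sum_(i | (rank x < rank i)%N) A (pivot x) i * v i.
Proof.
rewrite ffunE (bigD1 x) //=; congr (_ + _).
rewrite (bigID (fun i => rank x < rank i)%N) /= [X in _ + X]big1 ?addr0.
  by apply: eq_bigl => i; case: eqP => [->|]; rewrite ?ltnn ?andbF.
by move=> i /andP[]; rewrite eq_sym -leqNgt => xi /(A_triangular xi) ->; rewrite mul0r.
Qed.

Lemma lapply_triangular_eq0 v : lapply A v = 0 -> v = 0.
Proof.
move=> Av0; apply/ffunP => x; rewrite ffunE.
move: {2}(\max_i rank i - rank x)%N (erefl (\max_i rank i - rank x)%N) => k.
elim/ltn_ind: k x => k IH x hk.
have := congr1 (fun w : {ffun I -> R} => w (pivot x)) Av0.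
rewrite /= lapply_pivot big1 ?addr0 => [e|i xi].
  by rewrite -[v x]mul1r -(pivot_invP x) -mulrA e ffunE mulr0.
rewrite (IH (\max_j rank j - rank i)%N) ?mulr0 // -hk.
by have := @leq_bigmax _ rank i; lia.
Qed.

Lemma lapply_triangular_inj : injective (lapply A).
Proof.
move=> v w e; apply/eqP; rewrite -subr_eq0; apply/eqP/lapply_triangular_eq0.
by rewrite lapplyD lapplyN e subrr.
Qed.

Lemma delta_pivotE x :
  delta (pivot x) = [ffun y => pivot_inv x * lapply A (delta x) y]
    - \sum_(j | (rank j < rank x)%N)
        [ffun y => pivot_inv x * A (pivot j) x * delta (pivot j) y].
Proof.
have [pivot' _ pivotK'] := injF_bij pivot_inj.
apply/ffunP => y; rewrite -[y]pivotK'; move: (pivot' y) => z.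
rewrite !ffunE sum_ffunE (inj_eq pivot_inj).
under eq_bigr => i _ do rewrite ffunE mulrC.
under [X in _ - X]eq_bigr => j _ do rewrite !ffunE (inj_eq pivot_inj).
rewrite sum_delta_l; case: (eqVneq z x) => [->|zx].
  by rewrite pivot_invP big1 ?subr0 // => j; case: eqP => [<-|_]; rewrite ?ltnn ?mulr0.
have [zx_rank|xz_rank] := ltnP (rank z) (rank x).
  rewrite (bigD1 z) //= eqxx mulr1 big1 ?addr0 ?subrr // => j /andP[_ jz].
  by rewrite eq_sym (negbTE jz) mulr0.
rewrite A_triangular // mulr0 big1 ?subr0 // => j jx.
by case: eqP jx => [<-|_]; rewrite ?mulr0 // ltnNge xz_rank.
Qed.

Lemma lapply_triangular_surj w : exists v, lapply A v = w.
Proof.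
have delta_range x : exists v, lapply A v = delta (pivot x).
  elim/ltn_ind: (rank x) {-2}x (erefl (rank x)) => k IH {}x hk.
  have [u Au] : exists u, lapply A u =
      \sum_(j | (rank j < rank x)%N) [ffun y => pivot_inv x * A (pivot j) x * delta (pivot j) y].
    apply: lapply_range_sum => j; rewrite hk => /IH/(_ j erefl)[v Av].
    by exists [ffun y => pivot_inv x * A (pivot j) x * v y]; rewrite lapply_scale Av.
  exists ([ffun y => pivot_inv x * delta x y] - u).
  by rewrite lapplyD lapplyN lapply_scale Au -delta_pivotE.
have [pivot' _ pivotK'] := injF_bij pivot_inj.
have -> : w = \sum_x [ffun y => w (pivot x) * delta (pivot x) y].
  apply/ffunP => y; rewrite -[y]pivotK' sum_ffunE; move: (pivot' y) => z.
  under eq_bigr => x _ do rewrite !ffunE (inj_eq pivot_inj) mulrC.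
  by rewrite sum_delta_r.
apply: lapply_range_sum => x _; have [v Av] := delta_range x.
by exists [ffun y => w (pivot x) * v y]; rewrite lapply_scale Av.
Qed.

Lemma lapply_triangular_bij : bijective (lapply A).
Proof.
have inv w := constructive_indefinite_description _ (lapply_triangular_surj w).
exists (fun w => sval (inv w)) => [v|w]; last exact: svalP (inv w).
by apply: lapply_triangular_inj; rewrite (svalP (inv _)).
Qed.

End Triangular.

Section Homomorphisms.
Variables (R : comPzRingType) (n : nat) (q qinv : R).
Implicit Types I J K : finType.

Lemma lid_is_Uhom I (M : Umod R n I) : is_Uhom M M (@lid R I).
Proof. by split=> *; rewrite lcomp_lid lid_lcomp. Qed.

Lemma is_Uhom_comp I J K (M : Umod R n I) (N : Umod R n J) (L : Umod R n K)
    (A : lmap R I J) (B : lmap R J K) :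
  is_Uhom M N A -> is_Uhom N L B -> is_Uhom M L (lcomp B A).
Proof.
move=> [AH AE AF] [BH BE BF]; split.
- by move=> h; rewrite lcompA AH -lcompA BH lcompA.
- by move=> i l hi; rewrite lcompA AE // -lcompA BE // lcompA.
- by move=> i l hi; rewrite lcompA AF // -lcompA BF // lcompA.
Qed.

Lemma ltens_is_Uhom I J (M1 N1 : Umod R n I) (M2 N2 : Umod R n J)
    (P : lmap R I I) (Q : lmap R J J) :
  is_Uhom M1 N1 P -> is_Uhom M2 N2 Q ->
  is_Uhom (tensmod q qinv M1 M2) (tensmod q qinv N1 N2) (ltens P Q).
Proof.
move=> [PH PE PF] [QH QE QF]; split.
- by move=> h; rewrite /= !lcomp_ltens PH QH.
- move=> i l hi; rewrite /= lcomp_sumr lcomp_suml.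
  apply: functional_extensionality => x; apply: functional_extensionality => y.
  by apply: eq_bigr => a _; rewrite !lcomp_ltens PE // -lcompA QH !lcompA QE //.
- move=> i l hi; rewrite /= lcomp_sumr lcomp_suml.
  apply: functional_extensionality => x; apply: functional_extensionality => y.
  by apply: eq_bigr => a _; rewrite !lcomp_ltens QF // -lcompA PH lcompA PF // -lcompA.
Qed.

End Homomorphisms.

Section Minuscule.
Variables (R : comPzRingType) (n : nat) (q qinv : R).

Record minuscule (I : finType) (M : Umod R n I) (d : ('I_n -> int) -> I -> R) : Prop := {
  minuscule_H : forall h, actH M h = ldiag (d h);
  minuscule_K0 : forall i j, d (Kw i 0) j = 1;
  minuscule_E0 : forall i, actE M i 0 = @lid R I;
  minuscule_F0 : forall i, actF M i 0 = @lid R I;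
  minuscule_E : forall i l, (1 < l)%N -> actE M i l = fun _ _ => 0;
  minuscule_F : forall i l, (1 < l)%N -> actF M i l = fun _ _ => 0 }.

Lemma minuscule_H0 (I : finType) (M : Umod R n I) d i :
  minuscule M d -> actH M (Kw i 0) = @lid R I.
Proof.
move=> minM; rewrite (minuscule_H minM) -ldiag1; congr ldiag.
by apply: functional_extensionality => j; rewrite (minuscule_K0 minM).
Qed.

Lemma minuscule_is_Uhom (I J : finType) (M : Umod R n I) (N : Umod R n J) dM dN
    (P : lmap R I J) :
  minuscule M dM -> minuscule N dN ->
  (forall h, lcomp P (actH M h) = lcomp (actH N h) P) ->
  (forall i, (i.+1 < n)%N -> lcomp P (actE M i 1) = lcomp (actE N i 1) P) ->
  (forall i, (i.+1 < n)%N -> lcomp P (actF M i 1) = lcomp (actF N i 1) P) ->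
  is_Uhom M N P.
Proof.
move=> minM minN PH PE PF; split=> // i [|[|l]] hi.
- by rewrite (minuscule_E0 minM) (minuscule_E0 minN) lcomp_lid lid_lcomp.
- exact: PE.
- by rewrite (minuscule_E minM) ?(minuscule_E minN) // lcomp_zero zero_lcomp.
- by rewrite (minuscule_F0 minM) (minuscule_F0 minN) lcomp_lid lid_lcomp.
- exact: PF.
- by rewrite (minuscule_F minM) ?(minuscule_F minN) // lcomp_zero zero_lcomp.
Qed.

Section Tensor.
Variables (I J : finType) (M : Umod R n I) (N : Umod R n J).
Variables (dM : ('I_n -> int) -> I -> R) (dN : ('I_n -> int) -> J -> R).
Hypotheses (minM : minuscule M dM) (minN : minuscule N dN).
Let T := tensmod q qinv M N.

Lemma tensmod_H h : actH T h = ldiag (fun x => dM h x.1 * dN h x.2).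
Proof. by rewrite /= (minuscule_H minM) (minuscule_H minN) ltens_ldiag. Qed.

Lemma tensmod_E0 i : actE T i 0 = @lid R _.
Proof.
apply: functional_extensionality => x; apply: functional_extensionality => y.
rewrite /= big_ord1 /= expr0 mul1r /ltens (minuscule_E0 minM) (minuscule_E0 minN) lcomp_lid.
rewrite (minuscule_H minN) /ldiag (minuscule_K0 minN) mulr1.
by case: x y => [a b] [c d]; rewrite /lid xpair_eqE; case: (a == c); rewrite ?mul1r ?mul0r.
Qed.

Lemma tensmod_F0 i : actF T i 0 = @lid R _.
Proof.
apply: functional_extensionality => x; apply: functional_extensionality => y.
rewrite /= big_ord1 /= expr0 mul1r /ltens (minuscule_F0 minM) (minuscule_F0 minN) lcomp_lid.
rewrite (minuscule_H minM) /ldiag (minuscule_K0 minM) mulr1.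
by case: x y => [a b] [c d]; rewrite /lid xpair_eqE; case: (a == c); rewrite ?mul1r ?mul0r.
Qed.

Lemma tensmod_E_vanish i l : (2 < l)%N -> actE T i l = fun _ _ => 0.
Proof.
move=> l_gt2; apply: functional_extensionality => x; apply: functional_extensionality => y.
rewrite /= big1 // => a _; have [a_gt1|a_le1] := ltnP 1 a.
  by rewrite /ltens (minuscule_E minM) // mul0r mulr0.
by rewrite /ltens (minuscule_E minN) ?lcomp_zero ?mulr0 //; lia.
Qed.

Lemma tensmod_F_vanish i l : (2 < l)%N -> actF T i l = fun _ _ => 0.
Proof.
move=> l_gt2; apply: functional_extensionality => x; apply: functional_extensionality => y.
rewrite /= big1 // => a _; have [a_gt1|a_le1] := ltnP 1 a.
  by rewrite /ltens (minuscule_F minM) // lcomp_zero mul0r mulr0.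
by rewrite /ltens (minuscule_F minN) ?mulr0 //; lia.
Qed.

Lemma tensmod_E1 i x y :
  actE T i 1 x y = (x.1 == y.1)%:R * actE N i 1 x.2 y.2
                   + actE M i 1 x.1 y.1 * (dN (Kw i (-1)) x.2 * (x.2 == y.2)%:R).
Proof.
rewrite /= !big_ord_recl big_ord0 !lift0 /= ?subn0 ?subnn /= /ltens.
rewrite (minuscule_E0 minM) (minuscule_E0 minN).
rewrite !(minuscule_H minN) !lcomp_ldiagl (minuscule_K0 minN).
by rewrite expr0 !mul1r addr0.
Qed.

Lemma tensmod_E2 i x y :
  actE T i 2 x y = q * (actE M i 1 x.1 y.1 * (dN (Kw i (-1)) x.2 * actE N i 1 x.2 y.2)).
Proof.
rewrite /= !big_ord_recl big_ord0 !lift0 /= ?subn0 ?subn1 ?subnn /= /ltens.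
rewrite (minuscule_E minM i (ltnSn 1)) (minuscule_E minN i (ltnSn 1)) /=.
rewrite !(minuscule_H minN) !lcomp_ldiagl.
by rewrite !(mulr0, mul0r, add0r, addr0) mul1n expr1.
Qed.

Lemma tensmod_F1 i x y :
  actF T i 1 x y = dM (Kw i 1) x.1 * (x.1 == y.1)%:R * actF N i 1 x.2 y.2
                   + actF M i 1 x.1 y.1 * (x.2 == y.2)%:R.
Proof.
rewrite /= !big_ord_recl big_ord0 !lift0 /= ?subn0 ?subnn /= /ltens.
rewrite (minuscule_F0 minM) (minuscule_F0 minN).
rewrite !(minuscule_H minM) !lcomp_ldiagl (minuscule_K0 minM).
by rewrite expr0 !mul1r addr0.
Qed.

Lemma tensmod_F2 i x y :
  actF T i 2 x y = q * (dM (Kw i 1) x.1 * actF M i 1 x.1 y.1 * actF N i 1 x.2 y.2).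
Proof.
rewrite /= !big_ord_recl big_ord0 !lift0 /= ?subn0 ?subn1 ?subnn /= /ltens.
rewrite (minuscule_F minM i (ltnSn 1)) (minuscule_F minN i (ltnSn 1)) /=.
rewrite !(minuscule_H minM) !lcomp_ldiagl.
by rewrite !(mulr0, mul0r, add0r, addr0) mul1n expr1.
Qed.

End Tensor.

Lemma minuscule_tensmod_is_Uhom (I1 I2 J1 J2 : finType)
    (M1 : Umod R n I1) (M2 : Umod R n I2) (N1 : Umod R n J1) (N2 : Umod R n J2)
    dM1 dM2 dN1 dN2 (P : lmap R (I1 * I2)%type (J1 * J2)%type) :
  minuscule M1 dM1 -> minuscule M2 dM2 -> minuscule N1 dN1 -> minuscule N2 dN2 ->
  let T := tensmod q qinv M1 M2 in let U := tensmod q qinv N1 N2 in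
  (forall h, lcomp P (actH T h) = lcomp (actH U h) P) ->
  (forall i l, (i.+1 < n)%N -> (0 < l < 3)%N ->
     lcomp P (actE T i l) = lcomp (actE U i l) P) ->
  (forall i l, (i.+1 < n)%N -> (0 < l < 3)%N ->
     lcomp P (actF T i l) = lcomp (actF U i l) P) ->
  is_Uhom T U P.
Proof.
move=> minM1 minM2 minN1 minN2 T U PH PE PF; split=> // i [|[|[|l]]] hi.
- by rewrite (tensmod_E0 minM1 minM2) (tensmod_E0 minN1 minN2) lcomp_lid lid_lcomp.
- exact: PE.
- exact: PE.
- rewrite (tensmod_E_vanish minM1 minM2) ?(tensmod_E_vanish minN1 minN2) //.
  by rewrite lcomp_zero zero_lcomp.
- by rewrite (tensmod_F0 minM1 minM2) (tensmod_F0 minN1 minN2) lcomp_lid lid_lcomp.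
- exact: PF.
- exact: PF.
- rewrite (tensmod_F_vanish minM1 minM2) ?(tensmod_F_vanish minN1 minN2) //.
  by rewrite lcomp_zero zero_lcomp.
Qed.

End Minuscule.

(* Identities between matrix entries that are products of Kronecker deltas are
   checked by splitting on every boolean atom, discarding the branches with
   inconsistent index constraints and closing the others by ring arithmetic. *)
Ltac case_atom b :=
  lazymatch b with
  | true => fail
  | false => fail
  | ?x && ?y => first [case_atom x | case_atom y]
  | ?x || ?y => first [case_atom x | case_atom y]
  | ~~ ?x => case_atom x
  | @eq_op _ ?x ?y => let H := fresh "H" in case: (boolP b) => H; [try rewrite (eqP H) |]
  | _ => let H := fresh "H" in case: (boolP b) => H
  end.

Ltac case_delta :=
  match goal with
  | |- context [nat_of_bool ?b] => case_atom b
  | |- context [if ?b then _ else _] => case_atom b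
  end.

Lemma eq_ordE n (x y : 'I_n) : (x == y) = (x == y :> nat).
Proof. by []. Qed.

Lemma qpow1 (R : comPzRingType) (q qinv : R) : qpow q qinv 1 = q.
Proof. exact: expr1. Qed.

Lemma qpowN1 (R : comPzRingType) (q qinv : R) : qpow q qinv (-1) = qinv.
Proof. exact: expr1. Qed.

Ltac simpl_delta :=
  rewrite /= ?eqxx ?(ltn_eqF (ltnSn _)) ?(gtn_eqF (ltnSn _)) ?ltnn ?ltnSn /=
    ?expr1 ?mulr1n ?mulr0n ?oppr0 ?opprK ?qpow1 ?qpowN1
    ?(mul0r, mulr0, add0r, addr0, mul1r, mulr1).

Ltac split_deltas := repeat (case_delta; simpl_delta; try (exfalso; lia); try done).

(* Replace every ordinal known to have value [i] or [i.+1] by the ordinal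
   [oi] or [oi1] itself, and identify ordinals with equal values; this makes
   most of the atoms of an unfolded [psi] evaluate. *)
Ltac subst_ordinals oi oi1 :=
  repeat match goal with
  | H : is_true (@eq_op _ ?x ?x) |- _ => clear H
  | H : is_true (@eq_op _ (nat_of_ord ?x) (nat_of_ord ?y)) |- _ =>
      is_var x; is_var y; move/eqP/val_inj: H => H;
      first [ constr_eq x oi; assert_fails (constr_eq y oi1); subst y
            | constr_eq x oi1; assert_fails (constr_eq y oi); subst y
            | assert_fails (constr_eq x oi); assert_fails (constr_eq x oi1); subst x ]
  | H : is_true (@eq_op _ (nat_of_ord ?x) _) |- _ =>
      is_var x; assert_fails (constr_eq x oi); assert_fails (constr_eq x oi1);
      first [ have E : x = oi by apply: val_inj; exact: eqP H
            | have E : x = oi1 by apply: val_inj; exact: eqP H ]; clear H; subst x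
  end.

Section VectorRepresentation.
Variables (R : comPzRingType) (n : nat) (q qinv : R).
Local Notation qpow := (qpow q qinv).
Local Notation V := (Vmod n q qinv).
Local Notation Vs := (Vstar n q qinv).
Local Notation Vp := (V' n q qinv).

Lemma Kw0 i (j : 'I_n) : Kw i 0 j = 0.
Proof. exact: mul0r. Qed.

Lemma KwE i a (j : 'I_n) :
  Kw i a j = if nat_of_ord j == i then a else if nat_of_ord j == i.+1 then - a else 0.
Proof.
rewrite /Kw; case: eqP => [->|_]; first by rewrite (ltn_eqF (ltnSn i)) subr0 mulr1.
by case: eqP; rewrite ?sub0r ?mulrN1 ?subrr ?mulr0.
Qed.

Lemma Vmod_minuscule : minuscule V (fun h j => qpow (h j)).
Proof.
split=> [h|i j|i|i|i [|[|l]] //|i [|[|l]] //];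
  do 2?[apply: functional_extensionality => ?] => //=.
- by rewrite /ldiag; case: eqP => [->|_]; rewrite ?mul1r ?mul0r.
- by rewrite Kw0.
Qed.

Lemma lscale_sgnq0 (I : finType) z (A : lmap R I I) :
  z = 0 -> lscale (sgnq q qinv 0 z) A = A.
Proof.
move=> ->; apply: functional_extensionality => j; apply: functional_extensionality => i.
by rewrite /lscale /sgnq /= !expr0 !mul1r.
Qed.

Lemma Kw0_opp i : (fun j : 'I_n => - Kw i 0 j) = Kw i 0.
Proof. by apply: functional_extensionality => j; rewrite Kw0. Qed.

Lemma dualS_minuscule (I : finType) (M : Umod R n I) d :
  minuscule M d -> minuscule (dualS q qinv M) (fun h => d (fun j => - h j)).
Proof.
move=> minM; split=> [h|i j|i|i|i l l_gt1|i l l_gt1] /=.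
- by rewrite (minuscule_H minM) ltr_ldiag.
- by rewrite Kw0_opp (minuscule_K0 minM).
- by rewrite (minuscule_E0 minM) (minuscule_H0 _ minM) lcomp_lid lscale_sgnq0 ?ltr_lid.
- by rewrite (minuscule_F0 minM) (minuscule_H0 _ minM) lcomp_lid lscale_sgnq0 ?ltr_lid.
- by rewrite (minuscule_E minM) // zero_lcomp lscale0.
- by rewrite (minuscule_F minM) // lcomp_zero lscale0.
Qed.

Lemma dualSinv_minuscule (I : finType) (M : Umod R n I) d :
  minuscule M d -> minuscule (dualSinv q qinv M) (fun h => d (fun j => - h j)).
Proof.
move=> minM; split=> [h|i j|i|i|i l l_gt1|i l l_gt1] /=.
- by rewrite (minuscule_H minM) ltr_ldiag.
- by rewrite Kw0_opp (minuscule_K0 minM).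
- by rewrite (minuscule_E0 minM) (minuscule_H0 _ minM) lcomp_lid lscale_sgnq0 ?ltr_lid.
- by rewrite (minuscule_F0 minM) (minuscule_H0 _ minM) lcomp_lid lscale_sgnq0 ?ltr_lid.
- by rewrite (minuscule_E minM) // lcomp_zero lscale0.
- by rewrite (minuscule_F minM) // zero_lcomp lscale0.
Qed.

Section DualEntries.
Variables (I : finType) (M : Umod R n I) (d : ('I_n -> int) -> I -> R).
Hypothesis minM : minuscule M d.

Lemma dualS_E i l j k : actE (dualS q qinv M) i l j k =
  sgnq q qinv l (l * l.-1)%:Z * (actE M i l k j * d (Kw i l) j).
Proof. by rewrite /= /ltr /lscale (minuscule_H minM) lcomp_ldiagr. Qed.

Lemma dualS_F i l j k : actF (dualS q qinv M) i l j k =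
  sgnq q qinv l (- (l * l.-1)%:Z) * (d (Kw i (- l%:Z)) k * actF M i l k j).
Proof. by rewrite /= /ltr /lscale (minuscule_H minM) lcomp_ldiagl. Qed.

Lemma dualSinv_E i l j k : actE (dualSinv q qinv M) i l j k =
  sgnq q qinv l (- (l * l.-1)%:Z) * (d (Kw i l) k * actE M i l k j).
Proof. by rewrite /= /ltr /lscale (minuscule_H minM) lcomp_ldiagl. Qed.

Lemma dualSinv_F i l j k : actF (dualSinv q qinv M) i l j k =
  sgnq q qinv l (l * l.-1)%:Z * (actF M i l k j * d (Kw i (- l%:Z)) j).
Proof. by rewrite /= /ltr /lscale (minuscule_H minM) lcomp_ldiagr. Qed.

End DualEntries.

Lemma Vstar_minuscule : minuscule Vs (fun h j => qpow (- h j)).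
Proof. exact: dualS_minuscule Vmod_minuscule. Qed.

Lemma V'_minuscule : minuscule Vp (fun h j => qpow (- h j)).
Proof. exact: dualSinv_minuscule Vmod_minuscule. Qed.

Lemma Vmod_E1 i (j k : 'I_n) :
  actE V i 1 j k = ((j == i :> nat) && (k == i.+1 :> nat))%:R.
Proof. by []. Qed.

Lemma Vmod_F1 i (j k : 'I_n) :
  actF V i 1 j k = ((j == i.+1 :> nat) && (k == i :> nat))%:R.
Proof. by []. Qed.

Lemma Vstar_E1 i (j k : 'I_n) :
  actE Vs i 1 j k = - qinv * ((j == i.+1 :> nat) && (k == i :> nat))%:R.
Proof. by rewrite (dualS_E Vmod_minuscule) Vmod_E1 KwE /sgnq; split_deltas; ring. Qed.

Lemma Vstar_F1 i (j k : 'I_n) :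
  actF Vs i 1 j k = - q * ((j == i :> nat) && (k == i.+1 :> nat))%:R.
Proof. by rewrite (dualS_F Vmod_minuscule) Vmod_F1 KwE /sgnq; split_deltas; ring. Qed.

Lemma V'_E1 i (j k : 'I_n) :
  actE Vp i 1 j k = - q * ((j == i.+1 :> nat) && (k == i :> nat))%:R.
Proof. by rewrite (dualSinv_E Vmod_minuscule) Vmod_E1 KwE /sgnq; split_deltas; ring. Qed.

Lemma V'_F1 i (j k : 'I_n) :
  actF Vp i 1 j k = - qinv * ((j == i :> nat) && (k == i.+1 :> nat))%:R.
Proof. by rewrite (dualSinv_F Vmod_minuscule) Vmod_F1 KwE /sgnq; split_deltas; ring. Qed.

Hypothesis qK : q * qinv = 1.

Lemma qpowNK z : qpow (- z) * qpow z = 1.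
Proof.
case: z => [[|m]|m] /=; first exact: mulr1.
  by rewrite -exprMn mulrC qK expr1n.
by rewrite -exprMn qK expr1n.
Qed.

Lemma qpowS z : qpow (z + 1) = qpow z * q.
Proof.
case: z => [m|[|m]].
- by rewrite /= addn1 exprSr.
- by rewrite /= expr1 mulrC qK.
- have -> : Negz m.+1 + 1 = Negz m by rewrite !NegzE; lia.
  by rewrite /= [in RHS]exprSr -mulrA [qinv * q]mulrC qK mulr1.
Qed.

(* [qrho i] is the factor q^(n+1-2i) of the paper, whose index i is 1-based. *)
Definition qrho (i : nat) : R := qpow (n%:Z - 1 - 2 * i%:Z).

Lemma qrhoS i : qrho i.+1 * q * q = qrho i.
Proof. by rewrite /qrho -!qpowS; congr qpow; lia. Qed.

Lemma qrho_is_Uhom : is_Uhom Vp Vs (ldiag (fun j : 'I_n => qrho j)).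
Proof.
apply: (minuscule_is_Uhom V'_minuscule Vstar_minuscule) => [h|i _|i _].
- by rewrite (minuscule_H V'_minuscule) (minuscule_H Vstar_minuscule) ldiagC.
- apply: functional_extensionality => j; apply: functional_extensionality => k.
  rewrite lcomp_ldiagl lcomp_ldiagr V'_E1 Vstar_E1; split_deltas.
  by rewrite -(qrhoS i); ring: qK.
- apply: functional_extensionality => j; apply: functional_extensionality => k.
  rewrite lcomp_ldiagl lcomp_ldiagr V'_F1 Vstar_F1; split_deltas.
  by rewrite -(qrhoS i); ring: qK.
Qed.

Definition qrho_twist : lmap R ('I_n * 'I_n)%type ('I_n * 'I_n)%type :=
  ltens (ldiag (fun j : 'I_n => qrho j)) (@lid R 'I_n).

Lemma qrho_twist_bij : bijective (lapply qrho_twist).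
Proof.
rewrite /qrho_twist -ldiag1 ltens_ldiag.
apply: (@lapply_triangular_bij _ _ _ id (fun _ => 0%N)
          (fun x => qpow (- (n%:Z - 1 - 2 * (nat_of_ord x.1)%:Z)))) => //.
- by move=> x; rewrite /ldiag eqxx mul1r mulr1 qpowNK.
- by move=> x y /negbTE yx _; rewrite /ldiag yx mul0r.
Qed.

Lemma psi'_factor : psi' q qinv = lcomp (psi q qinv) qrho_twist.
Proof.
apply: functional_extensionality => x; apply: functional_extensionality => y.
by rewrite /qrho_twist -ldiag1 ltens_ldiag lcomp_ldiagr mulr1 mulrC.
Qed.

Lemma psi_weight h :
  lcomp (psi q qinv) (actH (tensmod q qinv Vs V) h)
  = lcomp (actH (tensmod q qinv V Vs) h) (psi q qinv).
Proof.
rewrite (tensmod_H _ _ Vstar_minuscule Vmod_minuscule).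
rewrite (tensmod_H _ _ Vmod_minuscule Vstar_minuscule).
apply: functional_extensionality => -[a b]; apply: functional_extensionality => -[i0 k].
have Na := qpowNK (h a); have Nb := qpowNK (h b).
have Ni := qpowNK (h i0); have Nk := qpowNK (h k).
by rewrite lcomp_ldiagr lcomp_ldiagl /psi /=; split_deltas; ring: Na Nb Ni Nk.
Qed.

(* Keeps [psi] folded while the actions are computed. *)
Local Arguments psi : simpl never.

Lemma psi_E i l : (i.+1 < n)%N -> (0 < l < 3)%N ->
  lcomp (psi q qinv) (actE (tensmod q qinv Vs V) i l)
  = lcomp (actE (tensmod q qinv V Vs) i l) (psi q qinv).
Proof.
(* A column or row of e_i or e_i^(2) on these tensor products has at most two
   nonzero entries, at the indices given to [big_support2]. *)
move=> hi; pose oi := Ordinal (ltnW hi); pose oi1 := Ordinal hi.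
have E1 := tensmod_E1 q qinv Vstar_minuscule Vmod_minuscule.
have E1' := tensmod_E1 q qinv Vmod_minuscule Vstar_minuscule.
have E2 := tensmod_E2 q qinv Vstar_minuscule Vmod_minuscule.
have E2' := tensmod_E2 q qinv Vmod_minuscule Vstar_minuscule.
case: l => [|[|[|l]]] // _;
  apply: functional_extensionality => -[a b]; apply: functional_extensionality => -[i0 k].
- rewrite /lcomp (big_support2 (u1 := (i0, oi)) (u2 := (oi1, k))); last first.
    move=> [c d]; rewrite !xpair_eqE E1 Vmod_E1 Vstar_E1 KwE !eq_ordE /= => h1 h2.
    by split_deltas.
  rewrite (big_support2 (u1 := (a, oi)) (u2 := (oi1, b))); last first.
    move=> [c d]; rewrite !xpair_eqE E1' Vmod_E1 Vstar_E1 KwE !eq_ordE /= => h1 h2.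
    by split_deltas.
  rewrite !E1 !E1' !xpair_eqE !Vmod_E1 !Vstar_E1 !KwE !eq_ordE /=.
  split_deltas; subst_ordinals oi oi1; rewrite /psi ?eq_ordE /=; split_deltas; ring: qK.
- rewrite /lcomp (big_support2 (u1 := (oi1, oi)) (u2 := (oi1, oi))); last first.
    move=> [c d]; rewrite !xpair_eqE E2 Vmod_E1 Vstar_E1 KwE !eq_ordE /= => h1 h2.
    by split_deltas.
  rewrite (big_support2 (u1 := (oi1, oi)) (u2 := (oi1, oi))); last first.
    move=> [c d]; rewrite !xpair_eqE E2' Vmod_E1 Vstar_E1 KwE !eq_ordE /= => h1 h2.
    by split_deltas.
  rewrite !E2 !E2' !xpair_eqE !Vmod_E1 !Vstar_E1 !KwE !eq_ordE /=.
  split_deltas; subst_ordinals oi oi1; rewrite /psi ?eq_ordE /=; split_deltas; ring: qK.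
Qed.

Lemma psi_F i l : (i.+1 < n)%N -> (0 < l < 3)%N ->
  lcomp (psi q qinv) (actF (tensmod q qinv Vs V) i l)
  = lcomp (actF (tensmod q qinv V Vs) i l) (psi q qinv).
Proof.
move=> hi; pose oi := Ordinal (ltnW hi); pose oi1 := Ordinal hi.
have F1 := tensmod_F1 q qinv Vstar_minuscule Vmod_minuscule.
have F1' := tensmod_F1 q qinv Vmod_minuscule Vstar_minuscule.
have F2 := tensmod_F2 q qinv Vstar_minuscule Vmod_minuscule.
have F2' := tensmod_F2 q qinv Vmod_minuscule Vstar_minuscule.
case: l => [|[|[|l]]] // _;
  apply: functional_extensionality => -[a b]; apply: functional_extensionality => -[i0 k].
- rewrite /lcomp (big_support2 (u1 := (i0, oi1)) (u2 := (oi, k))); last first.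
    move=> [c d]; rewrite !xpair_eqE F1 Vmod_F1 Vstar_F1 KwE !eq_ordE /= => h1 h2.
    by split_deltas.
  rewrite (big_support2 (u1 := (a, oi1)) (u2 := (oi, b))); last first.
    move=> [c d]; rewrite !xpair_eqE F1' Vmod_F1 Vstar_F1 KwE !eq_ordE /= => h1 h2.
    by split_deltas.
  rewrite !F1 !F1' !xpair_eqE !Vmod_F1 !Vstar_F1 !KwE !eq_ordE /=.
  split_deltas; subst_ordinals oi oi1; rewrite /psi ?eq_ordE /=; split_deltas; ring: qK.
- rewrite /lcomp (big_support2 (u1 := (oi, oi1)) (u2 := (oi, oi1))); last first.
    move=> [c d]; rewrite !xpair_eqE F2 Vmod_F1 Vstar_F1 KwE !eq_ordE /= => h1 h2.
    by split_deltas.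
  rewrite (big_support2 (u1 := (oi, oi1)) (u2 := (oi, oi1))); last first.
    move=> [c d]; rewrite !xpair_eqE F2' Vmod_F1 Vstar_F1 KwE !eq_ordE /= => h1 h2.
    by split_deltas.
  rewrite !F2 !F2' !xpair_eqE !Vmod_F1 !Vstar_F1 !KwE !eq_ordE /=.
  split_deltas; subst_ordinals oi oi1; rewrite /psi ?eq_ordE /=; split_deltas; ring: qK.
Qed.

Lemma psi_is_Uhom : is_Uhom (tensmod q qinv Vs V) (tensmod q qinv V Vs) (psi q qinv).
Proof.
apply: (minuscule_tensmod_is_Uhom Vstar_minuscule Vmod_minuscule
                                  Vmod_minuscule Vstar_minuscule).
- exact: psi_weight.
- exact: psi_E.
- exact: psi_F.
Qed.

(* Up to the flip (i, k) |-> (k, i), [psi] is triangular: it sends v_i^* (x) v_i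
   to q^-1 v_i (x) v_i^* plus multiples of the v_l (x) v_l^* with l < i. *)
Lemma psi_bij : bijective (lapply (@psi R n q qinv)).
Proof.
apply: (@lapply_triangular_bij _ _ _ (fun x => (x.2, x.1)) (fun x => nat_of_ord x.1)
          (fun x => if x.1 == x.2 then q else 1)).
- by move=> [a b] [c d] [-> ->].
- move=> [a b] /=; rewrite /psi /= !eqxx eq_sym.
  by case: eqP => [->|_]; rewrite /= ?eqxx ?mulr1 // mulrC.
- move=> [c d] [a b]; rewrite xpair_eqE /psi /= !eq_ordE => ab_cd cb.
  by split_deltas; lia.
Qed.

Lemma psi'_bij : bijective (lapply (@psi' R n q qinv)).
Proof.
have -> : lapply (psi' q qinv) = lapply (psi q qinv) \o lapply qrho_twist.
  by apply: functional_extensionality => v; rewrite psi'_factor lapply_lcomp.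
exact: bij_comp psi_bij qrho_twist_bij.
Qed.

End VectorRepresentation.

Theorem lemma5p1 (R : comPzRingType) (n : nat) (q qinv : R) :
  (1 <= n)%N -> q * qinv = 1 ->
  is_Uiso (tensmod q qinv (V' n q qinv) (Vmod n q qinv))
          (tensmod q qinv (Vmod n q qinv) (Vstar n q qinv)) (psi' q qinv)
  /\
  is_Uiso (tensmod q qinv (Vstar n q qinv) (Vmod n q qinv))
          (tensmod q qinv (Vmod n q qinv) (Vstar n q qinv)) (psi q qinv).
Proof.
move=> _ qK; have psi_hom := @psi_is_Uhom R n q qinv qK.
split; split; [| exact: @psi'_bij R n q qinv qK | exact: psi_hom
               | exact: @psi_bij R n q qinv qK].
rewrite psi'_factor; apply: is_Uhom_comp psi_hom.
exact: ltens_is_Uhom (@qrho_is_Uhom R n q qinv qK) (lid_is_Uhom _).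
Qed.
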